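(* Let $O$ be a validated totally-ordered object, $S$ a sequence of operations, $i\neq j$ processes, and $op_i, op_j\notin S$ operations issued by $i$ and $j$ respectively, with $\mathrm{valid}(S,op_i,i)=\mathit{True}$, $\mathrm{valid}(S,op_j,j)=\mathit{True}$, $\mathrm{valid}(S\|op_j,op_i,i)=\mathit{False}$ and $\mathrm{valid}(S\|op_i,op_j,j)=\mathit{True}$. Then, in an asynchronous system in which at most one of $i,j$ crashes, the following algorithm solves consensus between $i$ and $j$ (every correct one decides, both decide the same value, and it was proposed by $i$ or $j$). Setup: $O$ is initialized with state $S$; $c_i, c_j$ are reliable atomic SWMR registers written only by $i$ resp. $j$, initially $\bot$. For each process $k\in\{i,j\}$ there are reliable SWMR vectors $oplist_k$ (written only by $k$) and $reslist_k$ (written only by $O$), all entries initially $\bot$. LoggedApply$(op,k)$ at process $k$, with local counter $c_k$ starting at $1$: write $op$ into $oplist_k[c_k]$, wait until $reslist_k[c_k]\neq\bot$, read it as $res$, increment $c_k$, return $res$. The object runs, for each $k$, a task with its own counter $d_k$ starting at $1$: repeatedly wait until $oplist_k[d_k]\neq\bot$, read $op$ from it, compute $res\leftarrow O.\mathrm{apply}(op,k)$, write $res$ into $reslist_k[d_k]$, increment $d_k$. Process $i$, proposing $v_1$: write $v_1$ to $c_i$; $res\leftarrow$ LoggedApply$(op_i,i)$; if $res=(\mathit{NACK},-)$ read $v_2$ from $c_j$ and decide it, else decide $v_1$. Process $j$, proposing $v_2$: write $v_2$ to $c_j$; $res\leftarrow$ LoggedApply$(op_j,j)$; if there is an index $c$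 with $oplist_i[c]=op_i$, then wait until $reslist_i[c]\neq\bot$, read it as $opires$, and if $opires=(\mathit{ACK},r)$ read $v_1$ from $c_i$ and decide $v_1$, while if $opires=(\mathit{NACK},-)$ decide $v_2$; if there is no such index, decide $v_2$.
   Context: Validated object: given a predicate $\mathrm{valid}(\cdot, op, i)$ and function $\mathrm{execute}(\cdot, op, i)$, first argument a strictly partially ordered set of operations (a sequence when totally ordered), $op$ an operation, $i$ its issuer. Clients use $\mathrm{apply}(op,i)$, returning $(\mathit{ACK}, r)$ if $op$ is found valid and executed with result $r$, and $(\mathit{NACK},-)$ otherwise. For a sequence $S$, $S\|op$ denotes $S$ followed by $op$. The history of a run contains only operations for which $\mathrm{apply}$ returns $\mathit{ACK}$; $C(R)$ is the set of complete such operations; $op\rightarrow op'$ means the response of $op$ precedes the invocation of $op'$. Validated totally-ordered object: in every run $R$ there is a total order $\ll$ on $C(R)$ such that (1) $op\rightarrow op'$ implies $op\ll op'$; (2) for every $op\in C(R)$ issued by $i$, with $P(op)=\{op'\in C(R): op'\ll op\}$, $\mathrm{valid}(\langle P(op),\ll\rangle,op,i)=\mathit{True}$ and $op$ returns $\mathrm{execute}(\langle P(op),\ll\rangle,op,i)$. The object $O$ and the shared memory are assumed reliable (never fail). *)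

From mathcomp Require Import all_boot.

(** Each step performs one access to shared
    memory / one atomic [O.apply]. *)

Inductive resp (Res : Type) : Type :=
| ACK : Res -> resp Res
| NACK : resp Res.
Arguments ACK {Res} _.
Arguments NACK {Res}.

Inductive side : Type := Si | Sj.

Definition updS {A : Type} (f : side -> A) (k : side) (x : A) : side -> A :=
  fun k' => match k, k' with
            | Si, Si => x | Sj, Sj => x | _, _ => f k' end.

(** write into a (unbounded, 1-indexed) SWMR vector *)
Definition updV {A : Type} (f : nat -> option A) (n : nat) (x : A) : nat -> option A :=
  fun m => if m == n then Some x else f m.

Inductive agent : Type := AgI | AgJ | AgTask of side.

Section Algorithm.

Variables (Op : eqType) (Res Val Proc : Type).

Inductive pcI : Type :=
| I_write_c | I_write_op | I_wait_res | I_branch of resp Res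
| I_decided of option Val.

Inductive pcJ : Type :=
| J_write_c | J_write_op | J_wait_res | J_check | J_wait_opi of nat
| J_read_ci | J_decided of option Val.

Inductive pcT : Type := T_wait | T_apply of Op | T_write of resp Res.

Record task : Type := Task { tpc : pcT; tcnt : nat }.

Record config : Type := Config {
  creg    : side -> option Val;
  oplist  : side -> nat -> option Op;
  reslist : side -> nat -> option (resp Res);
  ostate  : seq Op;
  st_i    : pcI; cnt_i : nat;
  st_j    : pcJ; cnt_j : nat;
  tasks   : side -> task
}.

Definition set_creg s x := Config x (oplist s) (reslist s) (ostate s) (st_i s) (cnt_i s) (st_j s) (cnt_j s) (tasks s).
Definition set_oplist s x := Config (creg s) x (reslist s) (ostate s) (st_i s) (cnt_i s) (st_j s) (cnt_j s) (tasks s).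
Definition set_reslist s x := Config (creg s) (oplist s) x (ostate s) (st_i s) (cnt_i s) (st_j s) (cnt_j s) (tasks s).
Definition set_ostate s x := Config (creg s) (oplist s) (reslist s) x (st_i s) (cnt_i s) (st_j s) (cnt_j s) (tasks s).
Definition set_i s x n := Config (creg s) (oplist s) (reslist s) (ostate s) x n (st_j s) (cnt_j s) (tasks s).
Definition set_j s x n := Config (creg s) (oplist s) (reslist s) (ostate s) (st_i s) (cnt_i s) x n (tasks s).
Definition set_tasks s x := Config (creg s) (oplist s) (reslist s) (ostate s) (st_i s) (cnt_i s) (st_j s) (cnt_j s) x.

Definition init_config (S : seq Op) : config :=
  Config (fun _ => None) (fun _ _ => None) (fun _ _ => None) S
         I_write_c 1 J_write_c 1 (fun _ => Task T_wait 1).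

Variables (valid : seq Op -> Op -> Proc -> bool)
          (execute : seq Op -> Op -> Proc -> Res)
          (i j : Proc) (op_i op_j : Op) (v1 v2 : Val).

Definition proc_of (k : side) : Proc := match k with Si => i | Sj => j end.

Definition step_i (s s' : config) : Prop :=
  match st_i s with
  | I_write_c => s' = set_i (set_creg s (updS (creg s) Si (Some v1))) I_write_op (cnt_i s)
  | I_write_op =>
      s' = set_i (set_oplist s (updS (oplist s) Si (updV (oplist s Si) (cnt_i s) op_i)))
                 I_wait_res (cnt_i s)
  | I_wait_res =>
      match reslist s Si (cnt_i s) with
      | None => s' = s
      | Some r => s' = set_i s (I_branch r) (cnt_i s).+1
      end
  | I_branch (ACK _) => s' = set_i s (I_decided (Some v1)) (cnt_i s)
  | I_branch NACK => s' = set_i s (I_decided (creg s Sj)) (cnt_i s)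
  | I_decided _ => s' = s
  end.

Definition step_j (s s' : config) : Prop :=
  match st_j s with
  | J_write_c => s' = set_j (set_creg s (updS (creg s) Sj (Some v2))) J_write_op (cnt_j s)
  | J_write_op =>
      s' = set_j (set_oplist s (updS (oplist s) Sj (updV (oplist s Sj) (cnt_j s) op_j)))
                 J_wait_res (cnt_j s)
  | J_wait_res =>
      match reslist s Sj (cnt_j s) with
      | None => s' = s
      | Some _ => s' = set_j s J_check (cnt_j s).+1
      end
  | J_check =>
      (exists c, oplist s Si c = Some op_i /\ s' = set_j s (J_wait_opi c) (cnt_j s))
      \/ ((forall c, oplist s Si c <> Some op_i) /\ s' = set_j s (J_decided (Some v2)) (cnt_j s))
  | J_wait_opi c =>
      match reslist s Si c with
      | None => s' = s
      | Some (ACK _) => s' = set_j s J_read_ci (cnt_j s)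
      | Some NACK => s' = set_j s (J_decided (Some v2)) (cnt_j s)
      end
  | J_read_ci => s' = set_j s (J_decided (creg s Si)) (cnt_j s)
  | J_decided _ => s' = s
  end.

Definition step_task (k : side) (s s' : config) : Prop :=
  let t := tasks s k in
  match tpc t with
  | T_wait =>
      match oplist s k (tcnt t) with
      | None => s' = s
      | Some op => s' = set_tasks s (updS (tasks s) k (Task (T_apply op) (tcnt t)))
      end
  | T_apply op =>
      if valid (ostate s) op (proc_of k) then
        s' = set_tasks (set_ostate s (rcons (ostate s) op))
               (updS (tasks s) k (Task (T_write (ACK (execute (ostate s) op (proc_of k)))) (tcnt t)))
      else
        s' = set_tasks s (updS (tasks s) k (Task (T_write NACK) (tcnt t)))
  | T_write r =>
      s' = set_tasks (set_reslist s (updS (reslist s) k (updV (reslist s k) (tcnt t) r)))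
             (updS (tasks s) k (Task T_wait (tcnt t).+1))
  end.

Definition step (a : agent) (s s' : config) : Prop :=
  match a with
  | AgI => step_i s s'
  | AgJ => step_j s s'
  | AgTask k => step_task k s s'
  end.

Definition is_run (S : seq Op) (cfg : nat -> config) (sched : nat -> agent) : Prop :=
  cfg 0 = init_config S /\ forall n, step (sched n) (cfg n) (cfg n.+1).

End Algorithm.

(** agent [a] takes infinitely many steps (i.e. is correct / does not crash) *)
Definition inf_often (sched : nat -> agent) (a : agent) : Prop :=
  forall n, exists m, n <= m /\ sched m = a.

(** admissible run: O (both tasks) is reliable, at most one of i, j crashes *)
Definition admissible (sched : nat -> agent) : Prop :=
  inf_often sched (AgTask Si) /\ inf_often sched (AgTask Sj) /\
  (inf_often sched AgI \/ inf_often sched AgJ).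

Arguments I_decided {Res Val} _.
Arguments J_decided {Val} _.
Arguments is_run {Op Res Val Proc} valid execute i j op_i op_j v1 v2 S cfg sched.
Arguments st_i {Op Res Val} _.
Arguments st_j {Op Res Val} _.

From mathcomp Require Import all_boot.

(* The operation op_j is valid whether or not op_i precedes it, whereas op_i
   is valid only if op_j does not precede it; so O linearizes the two
   operations either as op_i, op_j (both acknowledged) or as op_j, op_i (op_i
   rejected).  Hence both processes decide by the response to op_i: i decides
   v1 iff op_i was acknowledged, and otherwise reads v2 from c_j, which j wrote
   before issuing op_j; j reads that response when op_i is in oplist_i, and if
   it is not, op_j, already applied, precedes op_i, which will be rejected.
   For termination, every step of a correct process or task increases a
   bounded rank, except waiting for a response, and the reliable tasks
   eventually provide every awaited response. *)

Set Implicit Arguments.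
Unset Strict Implicit.

Section Progress.
Variables (T : Type) (cfg : nat -> T) (sched : nat -> agent).

Lemma stable_after (P : T -> Prop) :
  (forall m, P (cfg m) -> P (cfg m.+1)) ->
  forall n m, n <= m -> P (cfg n) -> P (cfg m).
Proof.
by move=> HP n m; apply: (homo_leq (r := fun a b => P (cfg a) -> P (cfg b))) => // a b c; auto.
Qed.

Lemma eventually_reaches (f : T -> nat) a K (P : T -> Prop) :
  inf_often sched a ->
  (forall m, f (cfg m) <= f (cfg m.+1)) ->
  (forall m, P (cfg m) -> P (cfg m.+1)) ->
  (forall m, P (cfg m) -> f (cfg m) < K -> sched m = a -> f (cfg m) < f (cfg m.+1)) ->
  forall n, P (cfg n) -> exists2 m, n <= m & K <= f (cfg m).
Proof.
move=> Ha Hf HP + n Pn; elim: K => [_|K IH Hstep]; first by exists n.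
have [m nm Km] : exists2 m, n <= m & K <= f (cfg m).
  by apply: IH => m Pm lt; apply: Hstep => //; apply: ltnW.
have f_mono := homo_leq leqnn leq_trans Hf.
have [m' [mm' am']] := Ha m.
have Km' : K <= f (cfg m') := leq_trans Km (f_mono _ _ mm').
case: (ltngtP K (f (cfg m'))) => [lt|gt|eqK].
- by exists m' => //; exact: leq_trans nm mm'.
- by rewrite ltnNge Km' in gt.
- exists m'.+1; first by apply: leq_trans nm (leq_trans mm' _).
  rewrite eqK; apply: Hstep => //; last by rewrite -eqK.
  exact: stable_after HP _ _ (leq_trans nm mm') Pn.
Qed.

End Progress.

Arguments creg {Op Res Val} _ _.
Arguments oplist {Op Res Val} _ _ _.
Arguments reslist {Op Res Val} _ _ _.
Arguments ostate {Op Res Val} _.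
Arguments cnt_i {Op Res Val} _.
Arguments cnt_j {Op Res Val} _.
Arguments tasks {Op Res Val} _ _.
Arguments tpc {Op Res} _.
Arguments Task {Op Res} _ _.
Arguments I_branch {Res Val} _.
Arguments J_wait_opi {Val} _.
Arguments J_read_ci {Val}.
Arguments T_wait {Op Res}.
Arguments T_apply {Op Res} _.
Arguments T_write {Op Res} _.

Section Consensus.
Variables (Op : eqType) (Res Val : Type) (Proc : eqType)
  (valid : seq Op -> Op -> Proc -> bool)
  (execute : seq Op -> Op -> Proc -> Res)
  (S : seq Op) (i j : Proc) (op_i op_j : Op) (v1 v2 : Val).

Notation config := (config Op Res Val).
Notation step := (@step Op Res Val Proc valid execute i j op_i op_j v1 v2).

Definition rank_i (s : config) : nat :=
  match st_i s with
  | I_write_c => 0 | I_write_op => 1 | I_wait_res => 2 | I_branch _ => 3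
  | I_decided _ => 4
  end.

Definition rank_j (s : config) : nat :=
  match st_j s with
  | J_write_c => 0 | J_write_op => 1 | J_wait_res => 2 | J_check => 3
  | J_wait_opi _ => 4 | J_read_ci => 5 | J_decided _ => 6
  end.

(* Each process issues a single operation, at index 1, so a task waiting at
   index 2 has nothing left to do. *)
Definition rank_task (s : config) k : nat :=
  match tasks s k with
  | Task T_wait n => if n == 1 then 0 else 3
  | Task (T_apply _) _ => 1
  | Task (T_write _) _ => 2
  end.

Definition served (s : config) k := 2 < rank_task s k.

Definition issued (s : config) k :=
  match k with Si => 1 < rank_i s | Sj => 1 < rank_j s end.

Definition op_of k := match k with Si => op_i | Sj => op_j end.

(* The response of O to the operation of [k] as soon as [O.apply] has
   returned, before the task has copied it into [reslist]. *)
Definition response (s : config) k :=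
  if tpc (tasks s k) is T_write r then Some r else reslist s k 1.

Definition applied (s : config) k :=
  if response s k is Some (ACK _) then [:: op_of k] else [::].

Definition outcome (r : option (resp Res)) :=
  if r is Some (ACK _) then Some v1 else Some v2.

Definition task_inv (s : config) k :=
  [\/ tasks s k = Task T_wait 1 /\ reslist s k 1 = None,
      [/\ tasks s k = Task (T_apply (op_of k)) 1, reslist s k 1 = None & issued s k],
      exists r, [/\ tasks s k = Task (T_write r) 1, reslist s k 1 = None & issued s k]
    | [/\ tasks s k = Task T_wait 2, reslist s k 1 <> None & issued s k]].

Record inv (s : config) : Prop := {
  inv_ci : creg s Si = (if 0 < rank_i s then Some v1 else None);
  inv_cj : creg s Sj = (if 0 < rank_j s then Some v2 else None);
  inv_oplist : forall k n,
    oplist s k n = (if (n == 1) && issued s k then Some (op_of k) else None);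
  inv_cnt_i : cnt_i s = (if 2 < rank_i s then 2 else 1);
  inv_cnt_j : cnt_j s = (if 2 < rank_j s then 2 else 1);
  inv_task : forall k, task_inv s k;
  inv_ostate : ostate s = S ++ applied s Si ++ applied s Sj;
  inv_j_acked : response s Sj <> Some NACK;
  inv_i_nacked : response s Si = Some NACK -> response s Sj <> None;
  inv_i_branch : forall r, st_i s = I_branch r -> reslist s Si 1 = Some r;
  inv_i_decided : forall d, st_i s = I_decided d ->
    reslist s Si 1 <> None /\ d = outcome (reslist s Si 1);
  inv_j_served : 2 < rank_j s -> reslist s Sj 1 <> None;
  inv_j_wait : forall c, st_j s = J_wait_opi c -> c = 1 /\ 1 < rank_i s;
  inv_j_read : st_j s = J_read_ci -> exists r, reslist s Si 1 = Some (ACK r);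
  inv_j_decided : forall d, st_j s = J_decided d -> d = outcome (response s Si)
}.

Lemma inv_init : inv (init_config Op Res Val S).
Proof.
constructor => //=; try by case.
- by move=> [] n; rewrite andbF.
- by move=> k; apply: Or41.
- by rewrite /applied /response /= cats0.
Qed.

Lemma response_reslist s k r :
  inv s -> reslist s k 1 = Some r -> response s k = Some r.
Proof.
by move=> Hs; rewrite /response; case: (inv_task Hs k) => [[-> ->]|[-> ->]|[r' [-> ->]]|[-> _]].
Qed.

Lemma response_issued s k : inv s -> response s k <> None -> issued s k.
Proof.
by move=> Hs; rewrite /response; case: (inv_task Hs k) => [[-> ->]|[->]|[r [->]]|[->]].
Qed.

Ltac unfold_config :=
  unfold set_i, set_j, set_creg, set_oplist, set_reslist, set_ostate, set_tasks,
         rank_i, rank_j, issued, updV in *; simpl in *.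

Ltac unfold_response :=
  unfold_config; unfold applied, outcome, response in *; simpl in *.

Lemma inv_step_i s s' : inv s -> step AgI s s' -> inv s'.
Proof.
move=> Hs.
have nack_j : reslist s Si 1 = Some NACK -> 1 < rank_j s.
  move=> /(response_reslist Hs) /(inv_i_nacked Hs).
  exact: (response_issued Hs).
move: Hs nack_j; case: s => cr ol rl os si ni sj nj tk.
case: si => [|||r|d] [ci cj ol_eq cnti cntj tk_inv os_eq j_ack i_nack
   i_br i_dec j_srv j_wait j_read j_dec] nack_j /=; rewrite /step_i /=.
- move=> ->; constructor; unfold_config => //.
- move=> ->; constructor; unfold_config => //.
  + case=> n; last exact: ol_eq.
    by rewrite /updV cnti; case: (n =P 1) => [_|/eqP ne] //; rewrite ol_eq (negbTE ne).
  + case; last exact: tk_inv.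
    by case: (tk_inv Si) => [?|[_ _ w]|[? [_ _ w]]|[_ _ w]] //; apply: Or41.
  + by move=> c /j_wait [].
- case E: (rl Si ni) => [r|] ->; constructor; unfold_config => //.
  + by rewrite cnti.
  + by move=> _ [<-]; rewrite -E cnti.
- have rl1 := i_br r erefl.
  case E: r rl1 => [r'|] rl1 ->; constructor; unfold_config => // d [<-].
  + by rewrite rl1.
  + by rewrite rl1 cj ifT //; apply: ltnW; apply: nack_j.
- by move=> ->.
Qed.

Lemma inv_step_j s s' : inv s -> step AgJ s s' -> inv s'.
Proof.
move=> Hs.
have resp_i r : reslist s Si 1 = Some r -> response s Si = Some r.
  exact: response_reslist.
have issued_i : response s Si <> None -> 1 < rank_i s := response_issued Hs (k := Si).
have silent_i : ~~ issued s Si -> outcome (response s Si) = Some v2.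
  by move=> /negP w; case E: (response s Si) => [r|] //; case: w; apply: issued_i; rewrite E.
move: Hs resp_i issued_i silent_i; case: s => cr ol rl os si ni sj nj tk.
case: sj => [||||c||d] [ci cj ol_eq cnti cntj tk_inv os_eq j_ack i_nack
   i_br i_dec j_srv j_wait j_read j_dec] resp_i issued_i silent_i /=; rewrite /step_j /=.
- move=> ->; constructor; unfold_config => //.
- move=> ->; constructor; unfold_config => //.
  + case=> n; first exact: ol_eq.
    by rewrite /updV cntj; case: (n =P 1) => [_|/eqP ne] //; rewrite ol_eq (negbTE ne).
  + case; first exact: tk_inv.
    by case: (tk_inv Sj) => [?|[_ _ w]|[? [_ _ w]]|[_ _ w]] //; apply: Or41.
- case E: (rl Sj nj) => [r|] ->; constructor; unfold_config => //.
  + by rewrite cntj.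
  + by move: E; rewrite cntj => ->.
- case=> [[c [ol_c ->]]|[no_op_i ->]]; constructor; unfold_config => //.
  + move=> _ [<-]; move: ol_c; rewrite ol_eq.
    by case: (c =P 1) => [->|] //=; case: ifP.
  + move=> _ [<-]; symmetry; apply: silent_i; apply/negP => w.
    by case: (no_op_i 1); rewrite ol_eq w.
- have [c1 _] := j_wait c erefl; subst c.
  case E: (rl Si 1) => [[r|]|] ->; constructor; unfold_config => //.
  + by exists r.
  + by move=> _ [<-]; move: (resp_i _ E); rewrite /response /= => ->.
- move=> ->; constructor; unfold_config => // _ [<-].
  have [r /resp_i E] := j_read erefl.
  rewrite ci ifT; last by apply: ltnW; apply: issued_i; rewrite E.
  by move: E; rewrite /response /= => ->.
- by move=> ->.
Qed.

Hypotheses (valid_i : valid S op_i i) (valid_j : valid S op_j j)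
  (invalid_i_after_j : valid (rcons S op_j) op_i i = false)
  (valid_j_after_i : valid (rcons S op_i) op_j j).

Lemma inv_step_task_i s s' : inv s -> step (AgTask Si) s s' -> inv s'.
Proof.
move=> Hs.
have j_undecided : response s Sj = None -> 2 < rank_j s = false.
  move=> E; apply/negP => /(inv_j_served Hs); apply.
  by case R: (reslist s Sj 1) => [r|] //; rewrite (response_reslist Hs R) in E.
move: Hs j_undecided; case: s => cr ol rl os si ni sj nj tk Hs j_undecided.
case: (Hs) => ci cj ol_eq cnti cntj tk_inv os_eq j_ack i_nack i_br i_dec j_srv j_wait j_read j_dec.
move: (tk_inv Si); rewrite /= /step_task /task_inv /=.
unfold applied, outcome, response in *; simpl in *.
case=> [[E R]|[E R W]|[r [E R W]]|[E R W]]; rewrite E /=; rewrite E in os_eq i_nack j_dec.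
- case O: (ol Si 1) => [o|] ->; last exact: Hs.
  move: O; rewrite ol_eq /=; case: ifP => // W [<-].
  constructor; unfold_config; rewrite ?E //.
  by case; [apply: Or42 | exact: tk_inv Sj].
- rewrite R /= in os_eq j_dec.
  move: os_eq j_ack j_undecided.
  case RJ: (match tpc (tk Sj) with T_write r => Some r | _ => rl Sj 1 end) => [[rj|]|] //= os_eq _ j_undecided.
  + rewrite os_eq cats1 invalid_i_after_j => ->.
    constructor; unfold_response; rewrite ?RJ //.
    * by case; [apply: Or43; exists NACK | exact: tk_inv Sj].
    * by rewrite cats1.
  + rewrite os_eq cats0 valid_i => ->.
    constructor; unfold_response; rewrite ?RJ //.
    * by case; [apply: Or43; eexists | exact: tk_inv Sj].
    * by rewrite cats1.
    * by move=> d Hd; move: (j_undecided erefl); rewrite Hd.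
- move=> ->; constructor; unfold_response; rewrite ?E //.
  + by case; [apply: Or44 | exact: tk_inv Sj].
  + by move=> r0 /i_br; rewrite R.
  + by move=> d /i_dec []; rewrite R.
  + by move/j_read => [r0]; rewrite R.
- by rewrite ol_eq /= => ->.
Qed.

Lemma inv_step_task_j s s' : inv s -> step (AgTask Sj) s s' -> inv s'.
Proof.
case: s => cr ol rl os si ni sj nj tk Hs.
case: (Hs) => ci cj ol_eq cnti cntj tk_inv os_eq j_ack i_nack i_br i_dec j_srv j_wait j_read j_dec.
move: (tk_inv Sj); rewrite /= /step_task /task_inv /=.
unfold applied, outcome, response in *; simpl in *.
case=> [[E R]|[E R W]|[r [E R W]]|[E R W]]; rewrite E /=; rewrite E in os_eq i_nack j_ack.
- case O: (ol Sj 1) => [o|] ->; last exact: Hs.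
  move: O; rewrite ol_eq /=; case: ifP => // W [<-].
  constructor; unfold_response; rewrite ?E //.
  by case; [exact: tk_inv Si | apply: Or42].
- rewrite R /= cats0 in os_eq i_nack.
  move: os_eq i_nack j_dec.
  case RI: (match tpc (tk Si) with T_write r => Some r | _ => rl Si 1 end) => [[ri|]|] /=.
  + move=> os_eq _ j_dec; rewrite os_eq cats1 valid_j_after_i => ->.
    constructor; unfold_response; rewrite ?RI //.
    * by case; [exact: tk_inv Si | apply: Or43; eexists].
    * by rewrite -!cats1 catA.
  + by move=> _ /(_ erefl).
  + move=> os_eq _ j_dec; rewrite os_eq cats0 valid_j => ->.
    constructor; unfold_response; rewrite ?RI //.
    * by case; [exact: tk_inv Si | apply: Or43; eexists].
    * by rewrite cat0s cats1.
- move=> ->; constructor; unfold_response; rewrite ?E //.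
  by case; [exact: tk_inv Si | apply: Or44].
- by rewrite ol_eq /= => ->.
Qed.

Lemma inv_step a s s' : inv s -> step a s s' -> inv s'.
Proof.
case: a => [||[]]; [exact: inv_step_i | exact: inv_step_j | exact: inv_step_task_i
  | exact: inv_step_task_j].
Qed.

Ltac case_step := repeat match goal with
  | |- (match ?x with _ => _ end) -> _ => case: x => /=
  | |- _ \/ _ -> _ => case
  | |- (exists _, _) -> _ => case=> ?
  | |- _ /\ _ -> _ => case=> ?
  | |- (if ?b then _ else _) -> _ => case: b => /=
  | |- _ = _ -> _ => move=> -> /=
  | |- forall _, _ => move=> ?
  end; try done.

Lemma rank_i_mono a s s' : step a s s' -> rank_i s <= rank_i s'.
Proof.
case: s => cr ol rl os si ni sj nj tk.
by case: a => [||[]]; rewrite /= /step_i /step_j /step_task; unfold_config; case: si; case_step.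
Qed.

Lemma rank_j_mono a s s' : step a s s' -> rank_j s <= rank_j s'.
Proof.
case: s => cr ol rl os si ni sj nj tk.
by case: a => [||[]]; rewrite /= /step_i /step_j /step_task; unfold_config; case: sj; case_step.
Qed.

Lemma rank_task_mono a s s' k : inv s -> step a s s' -> rank_task s k <= rank_task s' k.
Proof.
move=> Hs; have tk_inv := inv_task Hs k; have ol_eq := inv_oplist Hs.
case: s {Hs} tk_inv ol_eq => cr ol rl os si ni sj nj tk tk_inv /= ol_eq; rewrite /rank_task.
case: a => [||k'].
- by clear tk_inv ol_eq; rewrite /= /step_i; unfold_config; case: si; case_step.
- by clear tk_inv ol_eq; rewrite /= /step_j; unfold_config; case: sj; case_step.
- rewrite /= /step_task; unfold_config.
  case: k k' tk_inv => [] []; rewrite /task_inv /= => -[[E _]|[E _]|[r [E _]]|[E _]];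
    rewrite E /= ?ol_eq /=; case_step; by rewrite E.
Qed.

Lemma decided_i_stable a s s' d :
  st_i s = I_decided d -> step a s s' -> st_i s' = I_decided d.
Proof.
case: s => cr ol rl os si ni sj nj tk /= ->.
by case: a => [||[]]; rewrite /= /step_i /step_j /step_task; unfold_config; case_step.
Qed.

Lemma decided_j_stable a s s' d :
  st_j s = J_decided d -> step a s s' -> st_j s' = J_decided d.
Proof.
case: s => cr ol rl os si ni sj nj tk /= ->.
by case: a => [||[]]; rewrite /= /step_i /step_j /step_task; unfold_config; case_step.
Qed.

Lemma served_reslist s k : inv s -> served s k -> reslist s k 1 <> None.
Proof.
move=> Hs; rewrite /served /rank_task.
by case: (inv_task Hs k) => [[-> _]|[-> _]|[r [-> _]]|[_ R _]].
Qed.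

Lemma step_i_progress s s' :
  inv s -> step AgI s s' -> rank_i s < 4 -> (rank_i s = 2 -> served s Si) ->
  rank_i s < rank_i s'.
Proof.
move=> Hs; have cnti := inv_cnt_i Hs; have resp_i := served_reslist Hs (k := Si).
case: s {Hs} cnti resp_i => cr ol rl os si ni sj nj tk /=.
rewrite /step_i /rank_i /=; case: si => [|||[r|]|d] //= -> resp_i;
  try by move=> -> //.
by move=> + _ /(_ erefl) /resp_i; case: (rl Si 1) => [r|] // -> _.
Qed.

Lemma step_j_progress s s' :
  inv s -> step AgJ s s' -> rank_j s < 6 ->
  (rank_j s = 2 -> served s Sj) -> (rank_j s = 4 -> served s Si) ->
  rank_j s < rank_j s'.
Proof.
move=> Hs; have cntj := inv_cnt_j Hs; have resp_i := served_reslist Hs (k := Si).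
have resp_j := served_reslist Hs (k := Sj); have j_wait := inv_j_wait Hs.
case: s {Hs} cntj resp_i resp_j j_wait => cr ol rl os si ni sj nj tk /=.
rewrite /step_j /rank_j /=; case: sj => [||||c||d] //= -> resp_i resp_j j_wait;
  try by move=> -> //.
- by move=> + _ /(_ erefl) /resp_j; case: (rl Sj 1) => [r|] // -> _.
- by case=> [[c' [_ ->]]|[_ ->]].
- have [-> _] := j_wait c erefl.
  by move=> + _ _ /(_ erefl) /resp_i; case: (rl Si 1) => [[r|]|] // -> _.
Qed.

Lemma step_task_progress k s s' :
  inv s -> step (AgTask k) s s' -> issued s k -> rank_task s k < 3 ->
  rank_task s k < rank_task s' k.
Proof.
move=> Hs; rewrite /= /step_task /rank_task => + W.
have ol1 : oplist s k 1 = Some (op_of k) by rewrite (inv_oplist Hs) W.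
case: (inv_task Hs k) => [[E _]|[E _ _]|[r [E _ _]]|[E _ _]]; rewrite E //= ?ol1;
  try case: ifP => _; move=> -> //; by rewrite /set_tasks /=; case: k {E ol1 W}.
Qed.

Lemma issued_mono a s s' k : step a s s' -> issued s k -> issued s' k.
Proof.
move=> st; case: k => /= W; apply: leq_trans W _;
  [exact: rank_i_mono st | exact: rank_j_mono st].
Qed.

Lemma served_mono a s s' k : inv s -> step a s s' -> served s k -> served s' k.
Proof. by move=> Hs st /leq_trans; apply; apply: rank_task_mono Hs st. Qed.

Lemma outcome_proposed r : outcome r = Some v1 \/ outcome r = Some v2.
Proof. by case: r => [[]|]; [left|right|right]. Qed.

Lemma inv_agreement s d d' :
  inv s -> st_i s = I_decided d -> st_j s = J_decided d' -> d = d'.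
Proof.
move=> Hs /(inv_i_decided Hs) [issued_i ->] /(inv_j_decided Hs) ->.
by case E: (reslist s Si 1) issued_i => [r|] // _; rewrite (response_reslist Hs E).
Qed.

Lemma inv_i_proposed s d : inv s -> st_i s = I_decided d -> d = Some v1 \/ d = Some v2.
Proof. by move=> Hs /(inv_i_decided Hs) [_ ->]; apply: outcome_proposed. Qed.

Lemma inv_j_proposed s d : inv s -> st_j s = J_decided d -> d = Some v1 \/ d = Some v2.
Proof. by move=> Hs /(inv_j_decided Hs) ->; apply: outcome_proposed. Qed.

Variables (cfg : nat -> config) (sched : nat -> agent).
Hypothesis run : is_run valid execute i j op_i op_j v1 v2 S cfg sched.

Lemma run_step n : step (sched n) (cfg n) (cfg n.+1).
Proof. by case: run. Qed.

Lemma inv_run n : inv (cfg n).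
Proof.
elim: n => [|n IH]; first by case: run => -> _; exact: inv_init.
exact: inv_step IH (run_step n).
Qed.

Lemma served_run k m : served (cfg m) k -> served (cfg m.+1) k.
Proof. exact: served_mono (inv_run m) (run_step m). Qed.

Lemma served_after k n m : n <= m -> served (cfg n) k -> served (cfg m) k.
Proof. exact: (stable_after (P := served^~ k) (served_run (k := k))). Qed.

Lemma task_eventually_served k n :
  inf_often sched (AgTask k) -> issued (cfg n) k -> exists2 m, n <= m & served (cfg m) k.
Proof.
move=> HT W; apply: (eventually_reaches (f := rank_task^~ k) (P := issued^~ k) HT) => //.
- by move=> m; apply: rank_task_mono (inv_run m) (run_step m).
- by move=> m; apply: issued_mono (run_step m).
- by move=> m Wm lt3 am; apply: step_task_progress (inv_run m) _ Wm lt3; rewrite -am; apply: run_step.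
Qed.

Lemma i_decides : inf_often sched AgI -> inf_often sched (AgTask Si) ->
  exists n d, st_i (cfg n) = I_decided d.
Proof.
move=> HI HT.
have rank_mono m : rank_i (cfg m) <= rank_i (cfg m.+1) := rank_i_mono (run_step m).
have i_step m : sched m = AgI -> step AgI (cfg m) (cfg m.+1) by move=> <-; apply: run_step.
have [m1 _ W] : exists2 m, 0 <= m & 2 <= rank_i (cfg m).
  apply: (eventually_reaches (P := fun _ => True) HI) => // m _ lt2 /i_step st.
  apply: step_i_progress (inv_run m) st _ _; first exact: ltn_trans lt2 _.
  by move=> e; rewrite e in lt2.
have [m2 m12 Sv] := task_eventually_served HT W.
have [m3 _] : exists2 m, m2 <= m & 4 <= rank_i (cfg m).
  apply: (eventually_reaches (P := served^~ Si) HI) => // [|m Sm lt4 /i_step st].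
  - exact: served_run.
  - exact: step_i_progress (inv_run m) st lt4 (fun _ => Sm).
by rewrite /rank_i; case E: (st_i (cfg m3)) => // [d] _; exists m3, d.
Qed.

Lemma j_reaches_wait :
  inf_often sched AgJ -> inf_often sched (AgTask Sj) ->
  exists2 m, 4 <= rank_j (cfg m) & served (cfg m) Sj.
Proof.
move=> HJ HT.
have j_step m : sched m = AgJ -> step AgJ (cfg m) (cfg m.+1) by move=> <-; apply: run_step.
have [m1 _ W] : exists2 m, 0 <= m & 2 <= rank_j (cfg m).
  apply: (eventually_reaches (P := fun _ => True) HJ) => // [m|m _ lt2 /j_step st].
  - exact: rank_j_mono (run_step m).
  - apply: step_j_progress (inv_run m) st _ _ _; first exact: ltn_trans lt2 _.
    + by move=> e; rewrite e in lt2.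
    + by move=> e; rewrite e in lt2.
have [m2 _ Sv] := task_eventually_served HT W.
have [m3 m23 W4] : exists2 m, m2 <= m & 4 <= rank_j (cfg m).
  apply: (eventually_reaches (P := served^~ Sj) HJ) => // [m|m|m Sm lt4 /j_step st].
  - exact: rank_j_mono (run_step m).
  - exact: served_run.
  - apply: step_j_progress (inv_run m) st (ltn_trans lt4 _) (fun _ => Sm) _ => // e.
    by rewrite e in lt4.
by exists m3 => //; apply: served_after m23 Sv.
Qed.

Lemma j_decides :
  inf_often sched AgJ -> inf_often sched (AgTask Si) -> inf_often sched (AgTask Sj) ->
  exists n d, st_j (cfg n) = J_decided d.
Proof.
move=> HJ HTi HTj.
have rank_mono m : rank_j (cfg m) <= rank_j (cfg m.+1) := rank_j_mono (run_step m).
have j_step m : sched m = AgJ -> step AgJ (cfg m) (cfg m.+1) by move=> <-; apply: run_step.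
have [m3 W4 Svj] := j_reaches_wait HJ HTj.
pose ready s := served s Sj /\ (4 < rank_j s \/ served s Si).
have [m4 _ R4] : exists2 m, m3 <= m & ready (cfg m).
  case: (ltngtP 4 (rank_j (cfg m3))) => [lt|gt|eq4].
  - by exists m3 => //; split; [|left].
  - by rewrite ltnNge W4 in gt.
  - have Wi : issued (cfg m3) Si.
      move: eq4; rewrite /rank_j; case E: (st_j (cfg m3)) => [||||c||d] // _.
      by have [_] := inv_j_wait (inv_run m3) E.
    have [m4 m34 Svi] := task_eventually_served HTi Wi.
    by exists m4 => //; split; [exact: served_after m34 Svj | right].
have [m5 _] : exists2 m, m4 <= m & 6 <= rank_j (cfg m).
  apply: (eventually_reaches (P := ready) HJ) => // [m [Sm [lt|Si_m]]|m [Sm Rm] lt6 /j_step st].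
  - by split; [exact: served_run | left; apply: leq_trans lt (rank_mono m)].
  - by split; [exact: served_run | right; exact: served_run].
  - apply: step_j_progress (inv_run m) st lt6 (fun _ => Sm) _ => e.
    by case: Rm => //; rewrite e.
by rewrite /rank_j; case E: (st_j (cfg m5)) => // [d] _; exists m5, d.
Qed.

Lemma agreement n m d d' :
  st_i (cfg n) = I_decided d -> st_j (cfg m) = J_decided d' -> d = d'.
Proof.
have i_stable := stable_after (P := fun s => st_i s = I_decided d)
  (fun m h => decided_i_stable h (run_step m)).
have j_stable := stable_after (P := fun s => st_j s = J_decided d')
  (fun m h => decided_j_stable h (run_step m)).
move=> /(i_stable _ _ (leq_maxl n m)) Di /(j_stable _ _ (leq_maxr n m)) Dj.
exact: inv_agreement (inv_run _) Di Dj.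
Qed.

End Consensus.

Theorem mainTheorem8
  (Op : eqType) (Res Val : Type) (Proc : eqType)
  (valid : seq Op -> Op -> Proc -> bool)
  (execute : seq Op -> Op -> Proc -> Res)
  (S : seq Op) (i j : Proc) (op_i op_j : Op)
  (Hij : i != j)
  (Hopi : op_i \notin S) (Hopj : op_j \notin S)
  (H1 : valid S op_i i = true)
  (H2 : valid S op_j j = true)
  (H3 : valid (rcons S op_j) op_i i = false)
  (H4 : valid (rcons S op_i) op_j j = true)
  (v1 v2 : Val)
  (cfg : nat -> config Op Res Val) (sched : nat -> agent) :
  is_run valid execute i j op_i op_j v1 v2 S cfg sched ->
  admissible sched ->
  (inf_often sched AgI -> exists n d, st_i (cfg n) = I_decided d) /\
  (inf_often sched AgJ -> exists n d, st_j (cfg n) = J_decided d) /\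
  (forall n m d d', st_i (cfg n) = I_decided d -> st_j (cfg m) = J_decided d' -> d = d') /\
  (forall n d, st_i (cfg n) = I_decided d -> d = Some v1 \/ d = Some v2) /\
  (forall n d, st_j (cfg n) = J_decided d -> d = Some v1 \/ d = Some v2).
Proof.
move=> run [HTi [HTj _]]; have inv_cfg := inv_run H1 H2 H3 H4 run.
split; [|split; [|split; [|split]]].
- by move=> HI; exact: (i_decides H1 H2 H3 H4 run HI HTi).
- by move=> HJ; exact: (j_decides H1 H2 H3 H4 run HJ HTi HTj).
- exact: (agreement H1 H2 H3 H4 run).
- by move=> n d; apply: inv_i_proposed (inv_cfg n).
- by move=> n d; apply: inv_j_proposed (inv_cfg n).
Qed.
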